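(* Assume Hypothesis 1 (stated in the context). If $\dfrac{|C|}{|C_{\max}|}<\dfrac{m(m-1)}{\delta(\delta-1)}$, then $\delta_{\max}\le 2\delta$.
   Context: $H(m,2)$: vertex set $\mathbb F_2^m$, coordinates indexed by a set $M$, $|M|=m$; $d$ Hamming distance. For a code $C$: minimum distance $\delta$, covering radius $\rho=\max_\alpha d(\alpha,C)$, $C_i=\{\alpha:d(\alpha,C)=i\}$. $\mathrm{Aut}(H(m,2))=B\rtimes L$, $B\cong\mathbb Z_2^m$ translations, $L\cong\mathrm{Sym}(M)$; $\mathrm{Aut}(C)$ is the setwise stabiliser of $C$. $C$ is completely transitive if $\mathrm{Aut}(C)$ is transitive on each of $C,C_1,\dots,C_\rho$. For a linear code $D$, $T_D$ is the group of translations by elements of $D$. For $C\ni\mathbf 0$, the maximal linear subcode $C_{\max}$ is the largest linear subcode $D\subseteq C$ with $T_D\le\mathrm{Aut}(C)$. Hypothesis 1: $C$ is a completely transitive code in $H(m,2)$ with $\mathbf 0\in C$ and minimum distance $\delta\ge5$; $X=\mathrm{Aut}(C)$; $C_{\max}$ is the maximal linear subcode with minimum distance $\delta_{\max}$; $X_{\max}$ is the setwise stabiliser of $C_{\max}$ in $X$; $2\le\dim C_{\max}\le m-2$. *)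

From HB Require Import structures.
From mathcomp Require Import all_boot all_order all_algebra all_fingroup.
Set Implicit Arguments. Unset Strict Implicit. Unset Printing Implicit Defensive.
Import GRing.Theory.
Local Open Scope ring_scope.

(* Vertices of H(m,2): row vectors 'rV['F_2]_m; coordinate set M = 'I_m. *)
Notation vert m := 'rV['F_2]_m.

Definition hdist (m : nat) (x y : vert m) : nat :=
  #|[set i : 'I_m | x 0 i != y 0 i]|.

Definition dist_to (m : nat) (C : {set vert m}) (a : vert m) (i : nat) : Prop :=
  (exists2 c, c \in C & hdist a c = i) /\ (forall c, c \in C -> (i <= hdist a c)%N).

Definition min_dist (m : nat) (C : {set vert m}) (delta : nat) : Prop :=
  (exists c1, exists c2, [/\ c1 \in C, c2 \in C, c1 != c2 & hdist c1 c2 = delta]) /\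
  (forall c1 c2, c1 \in C -> c2 \in C -> c1 != c2 -> (delta <= hdist c1 c2)%N).

(* Aut(H(m,2)) = B ⋊ L: the element (b, s) acts by coordinate permutation s
   followed by translation by b. *)
Definition aut_act (m : nat) (g : vert m * 'S_m) (x : vert m) : vert m :=
  col_perm g.2 x + g.1.

Definition in_AutC (m : nat) (C : {set vert m}) (g : vert m * 'S_m) : bool :=
  [set aut_act g x | x in C] == C.

(* completely transitive: Aut(C) transitive on each C_i (C_0 = C);
   C_i is empty for i > rho, so quantifying over all i is equivalent. *)
Definition completely_transitive (m : nat) (C : {set vert m}) : Prop :=
  forall (i : nat) (a b : vert m), dist_to C a i -> dist_to C b i ->
    exists2 g, in_AutC C g & aut_act g a = b.

Definition transl_in_Aut (m : nat) (C : {set vert m}) (D : {vspace vert m}) : Prop :=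
  forall d, d \in D -> in_AutC C (d, 1%g).

Definition admissible_linear_subcode (m : nat) (C : {set vert m})
    (D : {vspace vert m}) : Prop :=
  (forall x, x \in D -> x \in C) /\ transl_in_Aut C D.

Definition is_max_linear_subcode (m : nat) (C : {set vert m})
    (Cmax : {vspace vert m}) : Prop :=
  admissible_linear_subcode C Cmax /\
  (forall D : {vspace vert m}, admissible_linear_subcode C D -> (D <= Cmax)%VS).

Definition vs_set (m : nat) (D : {vspace vert m}) : {set vert m} :=
  [set x | x \in D].

From HB Require Import structures.
From mathcomp Require Import all_boot all_order all_algebra all_fingroup.
From mathcomp Require Import zify.
Set Implicit Arguments. Unset Strict Implicit. Unset Printing Implicit Defensive.
Import GRing.Theory Num.Theory.
Local Open Scope ring_scope.

(* Suppose delta_max > 2 delta.  Since delta >= 5, every weight-2 vector lies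
   at distance exactly 2 from C, and an automorphism of C mapping one weight-2
   vector to another must fix 0, hence is a pure coordinate permutation.  By
   complete transitivity on C_2 the supports of the codewords of weight delta
   therefore cover every ordered pair of distinct coordinates, so there are at
   least m(m-1) / (delta(delta-1)) of them.  Two such codewords differ by a
   vector of weight at most 2 delta < delta_max, so their translates by C_max
   are disjoint subsets of C, so |C| / |C_max| >= m(m-1) / (delta(delta-1)). *)

Lemma card_bigcup_leq (I T : finType) (P : pred I) (F : I -> {set T}) :
  (#|\bigcup_(i | P i) F i| <= \sum_(i | P i) #|F i|)%N.
Proof.
elim/big_rec2: _ => [|i n S _ IH]; first by rewrite cards0.
by rewrite (leq_trans (leq_card_setU _ _)) // leq_add2l.
Qed.

Definition offdiag (T : finType) (A : {set T}) : {set T * T} :=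
  [set p in setX A A | p.1 != p.2].

Lemma card_offdiag (T : finType) (A : {set T}) :
  #|offdiag A| = (#|A| * (#|A| - 1))%N.
Proof.
have := cardsID [set p : T * T | p.1 == p.2] (setX A A).
have -> : setX A A :&: [set p : T * T | p.1 == p.2] = [set (x, x) | x in A].
  apply/setP => -[x y]; rewrite !inE /=; apply/idP/imsetP.
    by case/andP => /andP [xA _] /eqP <-; exists x.
  by case=> z zA [-> ->]; rewrite zA eqxx.
rewrite card_imset; last by move=> x y [].
have -> : setX A A :\: [set p : T * T | p.1 == p.2] = offdiag A.
  by apply/setP => -[x y]; rewrite !inE /= andbC.
by rewrite cardsX mulnBr muln1 => <-; rewrite addKn.
Qed.

Lemma ltr_nat_ratio (R : numFieldType) (a b c d : nat) :
  (0 < b)%N -> (0 < d)%N ->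
  (a%:R / b%:R < c%:R / d%:R :> R) -> (a * d < c * b)%N.
Proof.
move=> b_gt0 d_gt0; rewrite -(ltr0n R) in b_gt0; rewrite -(ltr0n R) in d_gt0.
by rewrite (ltr_pdivrMr _ _ b_gt0) mulrAC (ltr_pdivlMr _ _ d_gt0) -!natrM ltr_nat.
Qed.

Section Hamming.
Variable m : nat.
Implicit Types (x y z : 'rV['F_2]_m) (g : 'rV['F_2]_m * 'S_m).

Definition supp x := [set t | x 0 t != 0].

Lemma hdistx0 x : hdist x 0 = #|supp x|.
Proof. by apply: eq_card => t; rewrite !inE mxE. Qed.

Lemma hdistC x y : hdist x y = hdist y x.
Proof. by apply: eq_card => t; rewrite !inE eq_sym. Qed.

Lemma hdistxx x : hdist x x = 0%N.
Proof. by apply/eqP; rewrite cards_eq0; apply/eqP/setP => t; rewrite !inE eqxx. Qed.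

Lemma hdist_triangle x y z : (hdist x z <= hdist x y + hdist y z)%N.
Proof.
apply: leq_trans (leq_card_setU _ _); apply: subset_leq_card.
by apply/subsetP => t; rewrite !inE; case: (eqVneq (x 0 t) (y 0 t)) => [->|].
Qed.

Lemma hdistE x y : hdist x y = hdist (x - y) 0.
Proof. by apply: eq_card => t; rewrite !inE !mxE subr_eq0. Qed.

Lemma aut_actE g x t : aut_act g x 0 t = x 0 (g.2 t) + g.1 0 t.
Proof. by rewrite !mxE. Qed.

Lemma aut_act0 g : aut_act g 0 = g.1.
Proof. by rewrite /aut_act col_perm_const add0r. Qed.

Lemma aut_act_transl x d : aut_act (d, 1%g) x = x + d.
Proof. by rewrite /aut_act col_perm1. Qed.

Lemma hdist_aut_act g x y : hdist (aut_act g x) (aut_act g y) = hdist x y.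
Proof.
rewrite /hdist; have -> : [set t | aut_act g x 0 t != aut_act g y 0 t] =
          g.2 @^-1: [set t | x 0 t != y 0 t].
  by apply/setP => t; rewrite !inE !aut_actE (inj_eq (@addIr _ _)).
exact/card_preimset/perm_inj.
Qed.

Lemma in_AutC_mem C g x : in_AutC C g -> x \in C -> aut_act g x \in C.
Proof. by move=> /eqP gC xC; rewrite -gC; apply: imset_f. Qed.

Definition pair_row (i j : 'I_m) : 'rV['F_2]_m :=
  \row_t (if (t == i) || (t == j) then 1 else 0).

Lemma supp_pair_row i j : supp (pair_row i j) = [set i; j].
Proof.
by apply/setP => t; rewrite !inE mxE; case: ifP; rewrite ?eqxx ?oner_eq0.
Qed.

Lemma hdist_pair_row0 i j : i != j -> hdist (pair_row i j) 0 = 2%N.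
Proof. by move=> ij; rewrite hdistx0 supp_pair_row cards2 ij. Qed.

Lemma card_translates_leq (C W : {set 'rV['F_2]_m}) (D : {vspace 'rV['F_2]_m}) :
  W \subset C -> transl_in_Aut C D ->
  {in W &, forall u v, u - v \in D -> u = v} ->
  (#|W| * #|vs_set D| <= #|C|)%N.
Proof.
move=> /subsetP WC TD W_sep; rewrite -cardsX.
have <- : #|[set p.1 + p.2 | p in setX W (vs_set D)]| = #|setX W (vs_set D)|.
  apply: card_in_imset => -[u d] [v e]; rewrite !inE /=.
  move=> /andP [uW dD] /andP [vW eD] /= sum_eq.
  have uv : u = v.
    apply: W_sep => //; rewrite (_ : u - v = e - d) ?memvB //.
    by apply/eqP; rewrite subr_eq addrAC eq_sym subr_eq sum_eq addrC.
  by move: sum_eq; rewrite uv => /addrI ->.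
apply/subset_leq_card/subsetP => x /imsetP [[u d]].
rewrite !inE /= => /andP [uW dD] ->.
by rewrite -aut_act_transl; apply/in_AutC_mem/WC/uW/TD.
Qed.

Lemma min_dist_separated (W : {set 'rV['F_2]_m}) (D : {vspace 'rV['F_2]_m})
    (r dD : nat) :
  {in W, forall w, hdist w 0 <= r}%N -> min_dist (vs_set D) dD -> (2 * r < dD)%N ->
  {in W &, forall u v, u - v \in D -> u = v}.
Proof.
move=> W_r [_ D_dD] r_lt u v uW vW uvD; apply/eqP; rewrite -subr_eq0.
apply: contraLR r_lt => uv_nz; rewrite -leqNgt.
apply: leq_trans (D_dD _ _ _ _ uv_nz) _; rewrite ?inE ?mem0v //.
rewrite -hdistE (leq_trans (hdist_triangle u 0 v)) // (hdistC 0) mul2n -addnn.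
by rewrite leq_add ?W_r.
Qed.

End Hamming.

Section CompletelyTransitiveCode.
Variables (m delta : nat) (C : {set 'rV['F_2]_m}).
Hypotheses (C_ct : completely_transitive C) (C0 : 0 \in C)
  (C_delta : min_dist C delta) (delta_gt4 : (4 < delta)%N).

Lemma hdist0_codeword c : c \in C -> c != 0 -> (delta <= hdist c 0)%N.
Proof. by move=> cC c_nz; case: C_delta => _; apply. Qed.

Lemma exists_codeword_of_weight_delta : exists2 w, w \in C & hdist w 0 = delta.
Proof.
have [[c1 [c2 [c1C c2C _ c12]]] _] := C_delta.
have c_in_C0 c : c \in C -> dist_to C c 0 by split => //; exists c; rewrite ?hdistxx.
have [g gA gc1] := C_ct (c_in_C0 _ c1C) (c_in_C0 _ C0).
exists (aut_act g c2); first exact: in_AutC_mem.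
by rewrite -gc1 hdist_aut_act hdistC.
Qed.

Lemma dist_to_pair_row (i j : 'I_m) : i != j -> dist_to C (pair_row i j) 2.
Proof.
move=> ij; split; first by exists 0; rewrite ?hdist_pair_row0.
move=> c cC; have [->|c_nz] := eqVneq c 0; first by rewrite hdist_pair_row0.
have := hdist0_codeword cC c_nz; have := hdist_triangle c (pair_row i j) 0.
by rewrite hdist_pair_row0 // (hdistC (pair_row i j)); lia.
Qed.

(* The image of 0 is a codeword within distance 4 of 0, hence 0 itself. *)
Lemma aut_transl_eq0 g x :
  in_AutC C g -> hdist x 0 = 2%N -> hdist (aut_act g x) 0 = 2%N -> g.1 = 0.
Proof.
move=> gA x2 gx2; apply/eqP; apply: contraLR delta_gt4 => g1_nz.
have g1C : g.1 \in C by rewrite -aut_act0; apply: in_AutC_mem.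
have := hdist0_codeword g1C g1_nz; have := hdist_triangle g.1 (aut_act g x) 0.
by rewrite -{2}aut_act0 hdist_aut_act (hdistC 0 x) x2 gx2; lia.
Qed.

Definition min_weight_words := [set w in C | hdist w 0 == delta].

Lemma min_weight_words_cover (k l : 'I_m) : k != l ->
  exists2 w, w \in min_weight_words & (k \in supp w) && (l \in supp w).
Proof.
move=> kl; have [w0 w0C w0_delta] := exists_codeword_of_weight_delta.
have [i [j [i_w0 j_w0 ij]]] : exists i j, [/\ i \in supp w0, j \in supp w0 & i != j].
  by apply/card_gt1P; rewrite -hdistx0 w0_delta; lia.
have [g gA g_ij] := C_ct (dist_to_pair_row ij) (dist_to_pair_row kl).
have g1_0 : g.1 = 0.
  by apply: (aut_transl_eq0 gA (hdist_pair_row0 ij)); rewrite g_ij hdist_pair_row0.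
have supp_g x : supp (aut_act g x) = g.2 @^-1: supp x.
  by apply/setP => t; rewrite !inE aut_actE g1_0 mxE addr0.
exists (aut_act g w0).
  have g0 : aut_act g 0 = 0 by rewrite aut_act0 g1_0.
  by rewrite inE in_AutC_mem //= -g0 hdist_aut_act w0_delta.
have : [set k; l] \subset supp (aut_act g w0).
  rewrite -supp_pair_row -g_ij !supp_g; apply: preimsetS.
  by rewrite supp_pair_row subUset !sub1set i_w0.
by rewrite subUset !sub1set => /andP [-> ->].
Qed.

Lemma card_min_weight_words :
  (m * (m - 1) <= #|min_weight_words| * (delta * (delta - 1)))%N.
Proof.
rewrite -[in X in (X <= _)%N](card_ord m) -cardsT -card_offdiag.
apply: (@leq_trans #|\bigcup_(w in min_weight_words) offdiag (supp w)|).
  apply/subset_leq_card/subsetP => -[k l]; rewrite !inE /= => kl.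
  have [w wW /andP [kw lw]] := min_weight_words_cover kl.
  by apply/bigcupP; exists w; rewrite // inE in_setX kw lw kl.
apply: leq_trans (card_bigcup_leq _ _) _; rewrite -sum_nat_const.
apply: leq_sum => w; rewrite inE => /andP [_ /eqP w_delta].
by rewrite card_offdiag -hdistx0 w_delta.
Qed.

End CompletelyTransitiveCode.

Theorem lemma2p8 (m : nat) (C : {set 'rV['F_2]_m}) (delta : nat)
    (Cmax : {vspace 'rV['F_2]_m}) (delta_max : nat) :
  completely_transitive C ->
  (0 : 'rV['F_2]_m)%R \in C ->
  min_dist C delta -> (5 <= delta)%N ->
  is_max_linear_subcode C Cmax ->
  min_dist (vs_set Cmax) delta_max ->
  (2 <= \dim Cmax <= m - 2)%N ->
  ((#|C|%:R / #|vs_set Cmax|%:R : rat) <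
     (m * (m - 1))%:R / (delta * (delta - 1))%:R)%R ->
  (delta_max <= 2 * delta)%N.
Proof.
move=> C_ct C0 C_delta delta_ge5 [[_ Cmax_transl] _] Cmax_dmax _ ratio_lt.
rewrite leqNgt; apply/negP => dmax_gt.
set W := min_weight_words delta C.
have W_sub : W \subset C by apply/subsetP => w; rewrite inE => /andP [].
have W_delta : {in W, forall w, hdist w 0 <= delta}%N.
  by move=> w; rewrite inE => /andP [_ /eqP ->].
have W_C := card_translates_leq W_sub Cmax_transl
  (min_dist_separated W_delta Cmax_dmax dmax_gt).
have W_pairs := card_min_weight_words C_ct C0 C_delta delta_ge5.
have Cmax_gt0 : (0 < #|vs_set Cmax|)%N by apply/card_gt0P; exists 0; rewrite inE mem0v.
have delta_gt0 : (0 < delta * (delta - 1))%N by rewrite muln_gt0; lia.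
have := ltr_nat_ratio Cmax_gt0 delta_gt0 ratio_lt; rewrite ltnNge => /negP; apply.
rewrite (leq_trans (leq_mul W_pairs (leqnn _))) // mulnAC.
by rewrite leq_mul2r W_C orbT.
Qed.
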